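(* Let $n\ge 1$, $k\ge 2$, and consider the tensor-based HPDS $\dot{\mathbf x}(t)=\mathscr A\mathbf x(t)^{k-1}$ with unknown almost symmetric $\mathscr A\in\mathbb R^{n\times\cdots\times n}$ ($k$ modes). Let $\mathbf X_0,\mathbf X_1\in\mathbb R^{n\times T}$ be the sampled state and state-derivative data matrices, and $\hat{\mathbf X}_0=\mathbf X_0\odot\mathbf X_0\odot\cdots\odot\mathbf X_0$ ($k-1$ factors). Then the data $(\mathbf X_0,\mathbf X_1)$ determine $\mathscr A$ uniquely (i.e. there is exactly one almost symmetric tensor $\mathscr A$ with $\mathbf A_{(k)}\hat{\mathbf X}_0=\mathbf X_1$) if and only if $$\mathrm{rank}(\hat{\mathbf X}_0)=\sum_{j=1}^{\min\{n,k-1\}}\frac{n!}{j!(n-j)!}\cdot\frac{(k-2)!}{(j-1)!(k-j-1)!}.$$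
   Context: A cubical $k$th-order tensor $\mathscr A\in\mathbb R^{n\times\cdots\times n}$ is almost symmetric if its entries $\mathscr A_{j_1\cdots j_k}$ are invariant under every permutation of the first $k-1$ indices $j_1,\dots,j_{k-1}$. The $k$-mode matricization $\mathbf A_{(k)}\in\mathbb R^{n\times n^{k-1}}$ is defined by $(\mathbf A_{(k)})_{j_k,c}=\mathscr A_{j_1\cdots j_k}$ with $c=j_1+\sum_{i=2}^{k-1}(j_i-1)n^{i-1}$. For $\mathbf x\in\mathbb R^n$, $\mathscr A\mathbf x^{k-1}:=\mathscr A\times_1\mathbf x\times_2\cdots\times_{k-1}\mathbf x\in\mathbb R^n$ (contraction of the first $k-1$ modes with $\mathbf x$), which equals $\mathbf A_{(k)}\mathbf x^{[k-1]}$ where $\mathbf x^{[k-1]}=\mathbf x\otimes\cdots\otimes\mathbf x$ ($k-1$ factors) is the Kronecker power. The Khatri–Rao product of $\mathbf A\in\mathbb R^{n\times s}$ and $\mathbf B\in\mathbb R^{m\times s}$ is $\mathbf A\odot\mathbf B=[\mathbf a_1\otimes\mathbf b_1,\dots,\mathbf a_s\otimes\mathbf b_s]$ (columnwise Kronecker product). Data: $\mathbf X_0=[\mathbf x(t_0),\mathbf x(t_0+\tau),\dots,\mathbf x(t_0+(T-1)\tau)]$, $\mathbf X_1=[\dot{\mathbf x}(t_0),\dots,\dot{\mathbf x}(t_0+(T-1)\tau)]$ for a trajectory of the system, with sampling time $\tau>0$, so that $\mathbf X_1=\mathbf A_{(k)}\hat{\mathbf X}_0$. *)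

From HB Require Import structures.
From mathcomp Require Import all_boot all_order all_algebra all_fingroup.
Set Implicit Arguments. Unset Strict Implicit. Unset Printing Implicit Defensive.
Import Order.TTheory GRing.Theory Num.Theory.
Local Open Scope ring_scope.

(* A cubical k-th order tensor in R^{n x ... x n}: entries indexed by
   multi-indices f : 'I_k -> 'I_n (0-based; mode i has index f i). *)
Definition tensor (R : Type) (n k : nat) := {ffun {ffun 'I_k -> 'I_n} -> R}.

(* Almost symmetric: invariant under every permutation of the first k-1
   modes, i.e. every permutation of 'I_k fixing the last mode k-1. *)
Definition almost_symmetric (R : Type) (n k : nat) (A : tensor R n k) : Prop :=
  forall (s : 'S_k) (f : {ffun 'I_k -> 'I_n}),
    (forall i : 'I_k, val i = k.-1 -> s i = i) ->
    A [ffun i => f (s i)] = A f.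

(* 0-based column index c = j_1 + sum_{i=2}^{k-1} (j_i - 1) n^{i-1}. *)
Definition col_code (n k : nat) (f : {ffun 'I_k -> 'I_n}) : nat :=
  (\sum_(i < k | (val i < k.-1)%N) f i * n ^ val i)%N.

(* k-mode matricization A_(k) in R^{n x n^{k-1}}:
   (A_(k))_{j_k, c} = A_{j_1 ... j_k}. The sum has exactly one term
   (the multi-index with last entry j and column code c). *)
Definition matricize (R : nzRingType) (n k : nat) (A : tensor R n k)
  : 'M[R]_(n, n ^ k.-1) :=
  \matrix_(j < n, c < n ^ k.-1)
    \sum_(f : {ffun 'I_k -> 'I_n} |
          [forall i : 'I_k, (val i == k.-1) ==> (f i == j)]
          && (col_code f == val c)) A f.

(* Khatri-Rao (columnwise Kronecker) product: column t is a_t (x) b_t,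
   (a (x) b)_{a*m + b} = a_a b_b (0-based). *)
Definition khatri_rao (R : nzRingType) (n m s : nat)
  (A : 'M[R]_(n, s)) (B : 'M[R]_(m, s)) : 'M[R]_(n * m, s) :=
  \matrix_(i < n * m, t < s)
    \sum_(a < n) \sum_(b < m) ((val i == a * m + b)%N)%:R * (A a t * B b t).

Fixpoint khatri_rao_pow (R : nzRingType) (n s : nat) (X : 'M[R]_(n, s)) (p : nat)
  : 'M[R]_(n ^ p, s) :=
  match p as p0 return 'M[R]_(n ^ p0, s) with
  | 0 => castmx (esym (expn0 n), erefl s) (const_mx 1 : 'M[R]_(1, s))
  | p'.+1 => castmx (esym (expnS n p'), erefl s) (khatri_rao X (khatri_rao_pow X p'))
  end.

From HB Require Import structures.
From mathcomp Require Import all_boot all_order all_algebra all_fingroup.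
Set Implicit Arguments. Unset Strict Implicit. Unset Printing Implicit Defensive.
Import Order.TTheory GRing.Theory Num.Theory.

(* An almost symmetric tensor is determined by a matrix U whose entry (j, g)
   is its value at any multi-index with last index j and multiset g of the
   first k-1 indices; its matricization is then U P^T, where P is the 0/1
   matrix sending a column index of A_(k) (a base-n numeral) to the multiset
   of its digits.  The rows of the Khatri-Rao power X^ = X0 (.) ... (.) X0
   also depend only on that multiset, so averaging over the classes of P
   shows that P^T X^ has the same rank as X^.  The data equation becomes
   U (P^T X^) = X1, whose solution, given that one exists, is unique iff
   P^T X^ has full row rank, i.e. iff rank X^ is the number of multisets of
   size k-1 over n symbols, C(n+k-2, k-1) = sum_j C(n,j) C(k-2,j-1). *)

Section BaseExpansion.
Variable n : nat.
Hypothesis n_gt0 : 0 < n.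

Definition digit (i c : nat) := (c %% n ^ i.+1) %/ n ^ i.

Let expn_gt0n i : 0 < n ^ i. Proof. by rewrite expn_gt0 n_gt0. Qed.

Lemma digit_lt i c : digit i c < n.
Proof. by rewrite /digit ltn_divLR // -expnS ltn_pmod. Qed.

Lemma sum_digits r c : \sum_(i < r) digit i c * n ^ i = c %% n ^ r.
Proof.
elim: r => [|r IH]; first by rewrite big_ord0 expn0 modn1.
rewrite big_ord_recr /= IH /digit addnC.
by rewrite -[c %% n ^ r](@modn_dvdm (n ^ r.+1)) ?dvdn_exp2l // -divn_eq.
Qed.

Lemma digit_modn i r c : i < r -> digit i (c %% n ^ r) = digit i c.
Proof. by move=> ir; rewrite /digit modn_dvdm // dvdn_exp2l. Qed.

Lemma digit_top r c : c < n ^ r.+1 -> digit r c = c %/ n ^ r.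
Proof. by move=> h; rewrite /digit modn_small. Qed.

Section Numeral.
Variable g : nat -> nat.
Hypothesis g_lt : forall i, g i < n.

Lemma numeral_lt r : \sum_(i < r) g i * n ^ i < n ^ r.
Proof.
elim: r => [|r IH]; first by rewrite big_ord0 expn0.
rewrite big_ord_recr /= expnSr.
have gr : g r * n ^ r <= n.-1 * n ^ r by rewrite leq_mul2r -ltnS prednK ?g_lt ?orbT.
apply: (@leq_trans (n ^ r + n.-1 * n ^ r)); first by rewrite -addSn leq_add.
by rewrite -{1}(mul1n (n ^ r)) -mulnDl add1n prednK // mulnC.
Qed.

Lemma numeral_modn i r : i < r ->
  (\sum_(j < r) g j * n ^ j) %% n ^ i.+1 = \sum_(j < i.+1) g j * n ^ j.
Proof.
elim: r => [//|r IH]; rewrite ltnS leq_eqVlt => /orP[/eqP ->|ir].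
  by rewrite modn_small // numeral_lt.
rewrite big_ord_recr /= -modnDm.
have /eqP -> : n ^ i.+1 %| g r * n ^ r by rewrite dvdn_mull // dvdn_exp2l.
by rewrite addn0 modn_mod IH.
Qed.

Lemma digit_numeral i r : i < r -> digit i (\sum_(j < r) g j * n ^ j) = g i.
Proof.
move=> ir; rewrite /digit numeral_modn // big_ord_recr /=.
by rewrite divnDMl // divn_small ?numeral_lt.
Qed.

End Numeral.
End BaseExpansion.

Lemma khatri_raoE (R : nzRingType) n m s (A : 'M[R]_(n, s)) (B : 'M[R]_(m, s))
    (i : 'I_(n * m)) (a : 'I_n) (b : 'I_m) t :
  i = a * m + b :> nat -> khatri_rao A B i t = (A a t * B b t)%R.
Proof.
move=> i_ab; rewrite mxE (bigD1 a) //= (bigD1 b) //= i_ab eqxx mul1r.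
have a_ab : forall (a' : 'I_n) (b' : 'I_m), a * m + b = a' * m + b' -> a' = a.
  move=> a' b' /(congr1 (divn^~ m)).
  have m_gt0 : 0 < m by apply: leq_ltn_trans (ltn_ord b).
  by rewrite !divnMDl // !divn_small // !addn0 => /ord_inj.
rewrite big1 ?addr0 => [|b' b'b]; last first.
  case: eqP => [/addnI/ord_inj b_eq|_]; last by rewrite mul0r.
  by rewrite b_eq eqxx in b'b.
rewrite big1 ?addr0 // => a' a'a; rewrite big1 // => b' _.
case: eqP => [/a_ab a_eq|_]; last by rewrite mul0r.
by rewrite a_eq eqxx in a'a.
Qed.

Lemma khatri_rao_powE (R : comNzRingType) m s (X : 'M[R]_(m.+1, s)) r
    (c : 'I_(m.+1 ^ r)) t :
  khatri_rao_pow X r c t = (\prod_(i < r) X (inord (digit m.+1 i c)) t)%R.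
Proof.
elim: r c => [|r IH] c /=; first by rewrite castmxE mxE big_ord0.
rewrite castmxE /= big_ord_recr /= mulrC.
have N_gt0 : 0 < m.+1 ^ r by rewrite expn_gt0.
have top_lt : c %/ m.+1 ^ r < m.+1 by rewrite ltn_divLR // -expnS.
rewrite (@khatri_raoE _ _ _ _ _ _ _ (Ordinal top_lt) (Ordinal (ltn_pmod c N_gt0)));
  last by rewrite /= -divn_eq.
rewrite !cast_ord_id IH digit_top //; congr (X _ t * _)%R.
- by apply: val_inj; rewrite /= inordK.
- by apply: eq_bigr => i _; rewrite digit_modn.
Qed.

Section IndexCoding.
Variables m q : nat.
Local Notation n := m.+1.

Definition digits (c : nat) : q.-tuple 'I_n := [tuple inord (digit n i c) | i < q].

Definition undigits (t : q.-tuple 'I_n) : nat := \sum_(i < q) tnth t i * n ^ i.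

Let nth_lt (t : q.-tuple 'I_n) j : val (nth ord0 t j) < n.
Proof. exact: ltn_ord. Qed.

Let undigits_numeral t : undigits t = \sum_(i < q) val (nth ord0 t i) * n ^ i.
Proof. by apply: eq_bigr => i _; rewrite (tnth_nth ord0). Qed.

Lemma undigits_lt t : undigits t < n ^ q.
Proof. by rewrite undigits_numeral (numeral_lt (ltn0Sn m) (nth_lt t)). Qed.

Lemma undigitsK : cancel undigits digits.
Proof.
move=> t; apply: eq_from_tnth => i; rewrite tnth_mktuple; apply: val_inj => /=.
rewrite undigits_numeral (digit_numeral (ltn0Sn m) (nth_lt t)) //.
by rewrite inordK ?nth_lt -?tnth_nth.
Qed.

Lemma digitsK c : undigits (digits c) = c %% n ^ q.
Proof.
rewrite -sum_digits //; apply: eq_bigr => i _.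
by rewrite tnth_mktuple inordK ?digit_lt.
Qed.

End IndexCoding.

Lemma khatri_rao_pow_digits (R : comNzRingType) m q T (X : 'M[R]_(m.+1, T))
    (c : 'I_(m.+1 ^ q)) t :
  khatri_rao_pow X q c t = (\prod_(x <- digits m q c) X x t)%R.
Proof.
by rewrite khatri_rao_powE big_tuple; apply: eq_bigr => i _; rewrite tnth_mktuple.
Qed.

Section Multisets.
Variables m q : nat.
Local Notation n := m.+1.

Definition multiset := {t : q.-tuple 'I_n | sorted <=%O t}.

Definition msort (t : q.-tuple 'I_n) : multiset :=
  exist _ (sort_tuple <=%O t) (sort_sorted le_total t).

Lemma msort_eq t t' : (msort t == msort t') = perm_eq t t'.
Proof.
apply/eqP/(perm_sortP le_total le_trans le_anti) => [/(congr1 (val \o val)) //|e].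
by do 2!apply: val_inj => /=.
Qed.

Lemma msort_val (g : multiset) : msort (val g) = g.
Proof.
by do 2!apply: val_inj => /=; rewrite sorted_sort ?(svalP g) //; apply: le_trans.
Qed.

Definition mclass (c : nat) : multiset := msort (digits m q c).

Definition class_size (g : multiset) := #|[pred c : 'I_(n ^ q) | mclass c == g]|.

Lemma class_size_gt0 g : 0 < class_size g.
Proof.
apply/card_gt0P; exists (Ordinal (undigits_lt (val g))).
by rewrite inE /mclass /= undigitsK msort_val.
Qed.

Lemma card_multiset : #|{: multiset}| = 'C(q + m, q).
Proof.
rewrite card_sig -card_sorted_tuples; apply: eq_card => t.
by rewrite !inE sorted_map.
Qed.

End Multisets.

Lemma khatri_rao_pow_class (R : comNzRingType) m q T (X : 'M[R]_(m.+1, T))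
    (c c' : 'I_(m.+1 ^ q)) :
  mclass m q c = mclass m q c' ->
  row c (khatri_rao_pow X q) = row c' (khatri_rao_pow X q).
Proof.
move=> /eqP; rewrite msort_eq => cc'.
by apply/rowP => t; rewrite !mxE !khatri_rao_pow_digits; apply: perm_big.
Qed.

Lemma Vandermonde_min n p :
  'C(n + p, p.+1) = \sum_(1 <= j < (minn n p.+1).+1) 'C(n, j) * 'C(p, j.-1).
Proof.
rewrite -binomial.Vandermonde -(big_mkord xpredT (fun j => 'C(n, j) * 'C(p, p.+1 - j))).
rewrite big_ltn // subn0 (bin_small (ltnSn p)) muln0 add0n.
rewrite (eq_big_nat _ _ (F2 := fun j => 'C(n, j) * 'C(p, j.-1))); last first.
  by case=> // j /andP[_ jp]; rewrite subSS bin_sub.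
case: (leqP n p.+1) => // np.
rewrite (big_cat_nat _ (n := n.+1)) //= -[RHS]addn0; congr (_ + _).
by rewrite big_nat_cond big1 // => j /andP[/andP[nj _] _]; rewrite bin_small.
Qed.

Section MultiIndex.
Variables m q : nat.
Local Notation n := m.+1.
Local Notation index := {ffun 'I_q.+1 -> 'I_n}.

Definition multi_index (j : 'I_n) (t : q.-tuple 'I_n) : index :=
  [ffun i => if unlift ord_max i is Some i' then tnth t i' else j].

Definition front (f : index) : q.-tuple 'I_n := [tuple f (lift ord_max i) | i < q].

Lemma front_multi_index j t : front (multi_index j t) = t.
Proof. by apply: eq_from_tnth => i; rewrite tnth_mktuple ffunE liftK. Qed.

Lemma multi_index_last j t : multi_index j t ord_max = j.
Proof. by rewrite ffunE unlift_none. Qed.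

Lemma multi_index_front (f : index) : multi_index (f ord_max) (front f) = f.
Proof.
by apply/ffunP => i; rewrite ffunE; case: unliftP => [i'|] ->; rewrite ?tnth_mktuple.
Qed.

Lemma col_code_front (f : index) : col_code f = undigits (front f).
Proof.
rewrite /col_code /undigits big_mkcond big_ord_recr /= ltnn addn0.
apply: eq_bigr => i _; rewrite ltn_ord tnth_mktuple; congr (f _ * _).
by apply: val_inj; rewrite /= /bump leqNgt ltn_ord.
Qed.

Lemma front_perm (s : 'S_q.+1) (f : index) :
  s ord_max = ord_max -> perm_eq (front [ffun i => f (s i)]) (front f).
Proof.
move=> s_max.
have s_lift i : unlift ord_max (s (lift ord_max i)) != None.
  case: unliftP => // e; have /eqP := @perm_inj _ s _ ord_max (etrans e (esym s_max)).
  by rewrite eq_sym (negbTE (neq_lift _ _)).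
pose s' i := odflt i (unlift ord_max (s (lift ord_max i))).
have lift_s' i : lift ord_max (s' i) = s (lift ord_max i).
  by rewrite /s'; move: (s_lift i); case: unliftP.
have s'_inj : injective s'.
  by move=> i1 i2 e; apply/(lift_inj (h := ord_max))/(@perm_inj _ s); rewrite -!lift_s' e.
apply/tuple_permP; exists (perm s'_inj); congr tval; apply: eq_from_tnth => i.
by rewrite !tnth_mktuple ffunE permE -lift_s'.
Qed.

End MultiIndex.

Section SymmetricTensors.
Variables (R : nzRingType) (m q : nat).
Local Notation n := m.+1.
Local Notation multiset := (multiset m q).
Local Notation mclass := (mclass m q).
Local Notation tensor := (tensor R n q.+1).
Local Open Scope ring_scope.

Lemma matricizeE (A : tensor) j (c : 'I_(n ^ q)) :
  matricize A j c = A (multi_index j (digits m q c)).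
Proof.
rewrite mxE (bigD1 (multi_index j (digits m q c))) /=; last first.
  rewrite col_code_front front_multi_index digitsK modn_small // eqxx andbT.
  apply/forall_inP => i /eqP i_max.
  by rewrite (_ : i = ord_max) ?multi_index_last //; apply: val_inj.
rewrite big1 ?addr0 // => f /andP[/andP[/forall_inP f_max /eqP f_code]].
have /eqP <- : f ord_max == j by apply: f_max.
by rewrite -{1}(multi_index_front f) -(undigitsK (front f)) -col_code_front f_code eqxx.
Qed.

Lemma almost_symmetric_perm (A : tensor) j (t t' : q.-tuple 'I_n) :
  almost_symmetric A -> perm_eq t t' -> A (multi_index j t) = A (multi_index j t').
Proof.
move=> symA /tuple_permP[s t_s].
have {}t_s : t = [tuple tnth t' (s i) | i < q] by apply: val_inj.
pose s' := lift_perm ord_max ord_max s.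
have -> : multi_index j t = [ffun i => multi_index j t' (s' i)].
  apply/ffunP => i; rewrite !ffunE.
  case: unliftP => [i'|] ->; last by rewrite lift_perm_id unlift_none.
  by rewrite lift_perm_lift liftK t_s tnth_mktuple.
by rewrite symA // => i i_max; rewrite (_ : i = ord_max) ?lift_perm_id //; apply: val_inj.
Qed.

Definition class_mx : 'M[R]_(n ^ q, #|{: multiset}|) :=
  \matrix_(c, a) (mclass c == enum_val a)%:R.

Definition coefs (A : tensor) : 'M[R]_(n, #|{: multiset}|) :=
  \matrix_(j, a) A (multi_index j (val (enum_val a))).

Definition tensor_of (U : 'M[R]_(n, #|{: multiset}|)) : tensor :=
  [ffun f : {ffun 'I_q.+1 -> 'I_n} => U (f ord_max) (enum_rank (msort (front f)))].

Lemma tensor_of_sym U : almost_symmetric (tensor_of U).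
Proof.
move=> s f s_max; rewrite !ffunE s_max //; congr (U _ (enum_rank _)).
by apply/eqP; rewrite msort_eq front_perm ?s_max.
Qed.

Lemma tensor_ofK U : coefs (tensor_of U) = U.
Proof.
apply/matrixP => j a.
by rewrite mxE ffunE multi_index_last front_multi_index msort_val enum_valK.
Qed.

Lemma coefsK A : almost_symmetric A -> tensor_of (coefs A) = A.
Proof.
move=> symA; apply/ffunP => f; rewrite ffunE mxE enum_rankK.
rewrite -[in RHS](multi_index_front f); apply: almost_symmetric_perm => //=.
by rewrite /= (perm_sort <=%O).
Qed.

Lemma matricize_tensor_of U : matricize (tensor_of U) = U *m class_mx^T.
Proof.
apply/matrixP => j c; rewrite matricizeE ffunE multi_index_last front_multi_index mxE.
rewrite (bigD1 (enum_rank (mclass c))) //= big1 => [|a a_c]; rewrite !mxE.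
  by rewrite enum_rankK eqxx mulr1 addr0.
by rewrite -(inj_eq enum_val_inj) enum_rankK eq_sym in a_c; rewrite (negbTE a_c) mulr0.
Qed.

Lemma matricize_sym A : almost_symmetric A -> matricize A = coefs A *m class_mx^T.
Proof. by move=> /coefsK {1}<-; rewrite matricize_tensor_of. Qed.

Lemma unique_sym_tensor_iff T (K : 'M[R]_(n ^ q, T)) (X : 'M[R]_(n, T)) :
  (exists! A : tensor, almost_symmetric A /\ matricize A *m K = X)
  <-> exists! U, U *m (class_mx^T *m K) = X.
Proof.
have solE (A : tensor) : almost_symmetric A ->
    matricize A *m K = coefs A *m (class_mx^T *m K).
  by move=> /matricize_sym ->; rewrite mulmxA.
have sol_tensor_of U : U *m (class_mx^T *m K) = X ->
    almost_symmetric (tensor_of U) /\ matricize (tensor_of U) *m K = X.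
  move=> UX; split; first exact: tensor_of_sym.
  by rewrite solE ?tensor_ofK //; apply: tensor_of_sym.
split=> [[A [[symA AX] A_uniq]]|[U [UX U_uniq]]].
- exists (coefs A); split=> [|U UX]; first by rewrite -solE.
  by rewrite -(tensor_ofK U); congr coefs; apply/A_uniq/sol_tensor_of.
- exists (tensor_of U); split=> [|A [symA AX]]; first exact: sol_tensor_of.
  by rewrite -(coefsK symA); congr tensor_of; apply: U_uniq; rewrite -solE.
Qed.

End SymmetricTensors.

Local Open Scope ring_scope.

(* With no rows every solution would be unique, hence the m.+1. *)
Lemma unique_solution_row_free (F : fieldType) m r T (B : 'M[F]_(r, T))
    (X : 'M[F]_(m.+1, T)) :
  (exists U0, U0 *m B = X) -> (exists! U, U *m B = X) <-> row_free B.
Proof.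
move=> [U0 U0X]; split=> [[U [UX U_uniq]]|freeB]; last first.
  by exists U0; split=> // U UX; apply: (row_free_inj freeB); rewrite UX.
rewrite -kermx_eq0; apply: contraT => /rowV0Pn[w /sub_kermxP wB w_neq0].
pose V := U0 + const_mx 1 *m w.
have VX : V *m B = X by rewrite mulmxDl -mulmxA wB mulmx0 addr0.
suff : V != U0 by rewrite -(U_uniq _ VX) -(U_uniq _ U0X) eqxx.
rewrite -subr_eq0 addrC addKr; apply: contraNneq w_neq0 => w0.
apply/eqP/rowP => j; have := congr1 (fun M : 'M_(m.+1, r) => M 0 j) w0.
by rewrite !mxE big_ord1 mxE mul1r.
Qed.

Section ClassAverage.
Variables (R : numFieldType) (m q T : nat).
Local Notation n := m.+1.
Local Notation mclass := (mclass m q).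
Local Notation class_mx := (@class_mx R m q).
Variable M : 'M[R]_(n ^ q, T).
Hypothesis M_class : forall c c' : 'I_(n ^ q), mclass c = mclass c' -> row c M = row c' M.

Definition average_mx : 'M[R]_(n ^ q, #|{: multiset m q}|) :=
  \matrix_(c, a) ((mclass c == enum_val a)%:R / (class_size (enum_val a))%:R).

Lemma class_mx_tr_mulE (c : 'I_(n ^ q)) t :
  (class_mx^T *m M) (enum_rank (mclass c)) t = (class_size (mclass c))%:R * M c t.
Proof.
rewrite mxE (bigID (fun c' : 'I_(n ^ q) => mclass c' == mclass c)) /=.
rewrite [X in _ + X]big1 ?addr0.
  rewrite (eq_bigr (fun _ => M c t)) ?sumr_const ?mulr_natl // => c' /eqP c'c.
  rewrite !mxE enum_rankK c'c eqxx mul1r.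
  by have := congr1 (fun r : 'rV_T => r 0 t) (M_class c'c); rewrite !mxE.
by move=> c' /negbTE c'c; rewrite !mxE enum_rankK c'c mul0r.
Qed.

Lemma average_class_mx : average_mx *m (class_mx^T *m M) = M.
Proof.
apply/matrixP => c t; rewrite mxE (bigD1 (enum_rank (mclass c))) //= big1 => [|a a_c].
  rewrite class_mx_tr_mulE !mxE addr0 enum_rankK eqxx mul1r mulrA mulVf ?mul1r //.
  by rewrite pnatr_eq0 -lt0n class_size_gt0.
rewrite -(inj_eq enum_val_inj) enum_rankK eq_sym in a_c.
by rewrite mxE (negbTE a_c) !mul0r.
Qed.

Lemma mxrank_class_mx_mul : \rank (class_mx^T *m M) = \rank M.
Proof.
by apply/eqP; rewrite eqn_leq mxrankM_maxr /= -{1}average_class_mx mxrankM_maxr.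
Qed.

End ClassAverage.

Theorem mainTheorem1 (R : realFieldType) (n k T : nat)
  (X0 X1 : 'M[R]_(n, T)) :
  (1 <= n)%N -> (2 <= k)%N ->
  (exists A0 : tensor R n k,
      almost_symmetric A0 /\ matricize A0 *m khatri_rao_pow X0 k.-1 = X1) ->
  ((exists! A : tensor R n k,
      almost_symmetric A /\ matricize A *m khatri_rao_pow X0 k.-1 = X1)
   <->
   \rank (khatri_rao_pow X0 k.-1)
     = (\sum_(1 <= j < (minn n k.-1).+1) 'C(n, j) * 'C(k.-2, j.-1))%N).
Proof.
move=> n_gt0 k_gt1 [A0 [symA0 A0X]].
case: n n_gt0 X0 X1 A0 symA0 A0X => // m _ X0 X1 A0 symA0 A0X.
case: k k_gt1 A0 symA0 A0X => [|[|p]] // _ A0 symA0 A0X.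
rewrite /= -Vandermonde_min addSnnS addnC -card_multiset.
rewrite -(mxrank_class_mx_mul (khatri_rao_pow_class X0)).
apply: (iff_trans (unique_sym_tensor_iff _ _)).
apply: (iff_trans (unique_solution_row_free _)); last by split=> /eqP.
by exists (coefs A0); rewrite mulmxA -matricize_sym.
Qed.
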